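(* Let $M$ be a complete metric space and let $C^*(M)$ denote the normed space of all bounded continuous $\mathbb{K}$-valued functions on $M$ (where $\mathbb{K}=\mathbb{R}$ or $\mathbb{C}$), equipped with the supremum norm. If $C^*(M)$ admits an isometric shift, then $M$ is separable.
   Context: For a normed space $\mathcal{K}$, a map $T:\mathcal{K}\to\mathcal{K}$ is an (isometric) shift operator if (1) $T$ is a linear isometry, (2) the range $T(\mathcal{K})$ has codimension $1$ in $\mathcal{K}$, and (3) $\bigcap_{n=1}^{\infty} T^n(\mathcal{K})=\{0\}$. *)

From mathcomp Require Import all_boot all_algebra.
From mathcomp Require Import all_classical all_reals all_analysis.
From mathcomp Require Import complex.
Import Num.Theory GRing.Theory numFieldNormedType.Exports.
Local Open Scope classical_set_scope.
Local Open Scope ring_scope.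

(* The scalar field K is an arbitrary numFieldType; it is topologized by its
   norm through K^o (numFieldTopology).  We instantiate K := R and K := R[i]. *)

Definition Cstar (K : numFieldType) (M : topologicalType) : set (M -> K^o) :=
  [set f | continuous f /\ exists r : K, forall x, `|f x| <= r].
Arguments Cstar {K M}.

Definition supnorm_le (K : numFieldType) (M : Type) (f : M -> K^o) (r : K) :=
  forall x, `|f x| <= r.
Arguments supnorm_le {K M}.

(* T is an (isometric) shift operator on the normed space C^*(M) with the
   supremum norm:
   - T maps C^*(M) into C^*(M) and is K-linear on it;
   - T is an isometry: ||T f|| = ||f|| (expressed as: f and T f have exactly
     the same upper bounds for their sup norms);
   - T(C^*(M)) has codimension 1 in C^*(M);
   - the ranges T^n(C^*(M)), n >= 1, intersect in {0}. *)
Definition isometric_shift (K : numFieldType) (M : topologicalType)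
    (T : (M -> K^o) -> (M -> K^o)) : Prop :=
  [/\ (forall f, Cstar f -> Cstar (T f)),
      (forall (a : K) f g, Cstar f -> Cstar g ->
          T (fun x => a * f x + g x) = (fun x => a * T f x + T g x)),
      (forall f, Cstar f -> forall r : K, supnorm_le f r <-> supnorm_le (T f) r),
      (exists2 g, Cstar g &
          ~ (exists2 h, Cstar h & g = T h) /\
          forall f, Cstar f ->
            exists2 h, Cstar h & exists c : K, f = (fun x => T h x + c * g x))
    & (forall f, Cstar f ->
          (forall n : nat, (0 < n)%N -> exists2 h, Cstar h & f = iter n T h) ->
          f = (fun _ => 0))].

Definition has_isometric_shift (K : numFieldType) (M : topologicalType) :=
  exists T, @isometric_shift K M T.

Definition complete_space (T : uniformType) :=
  forall F : set_system T, ProperFilter F -> cauchy F -> exists x : T, F --> x.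

Definition separable_space (T : topologicalType) :=
  exists S : set T, countable S /\ dense S.

From mathcomp Require Import all_boot all_order all_algebra.
From mathcomp Require Import all_classical all_reals all_analysis.
From mathcomp Require Import complex.
From mathcomp Require Import finmap ring lra.
Import Order.TTheory Num.Theory GRing.Theory numFieldNormedType.Exports.
Local Open Scope classical_set_scope.
Local Open Scope ring_scope.

Set Implicit Arguments.
Unset Strict Implicit.
Unset Printing Implicit Defensive.

(** Let [T] be an isometric shift of [C*(M)], so that [C*(M) = T(C*(M)) + K g0] is a
    direct sum.  Since [T] is an isometry and [C*(M)] is complete, the range of [T] is
    closed; hence the coefficient [coef f] of [g0] in [f], and the [T]-preimage [pre f]
    of the rest, depend boundedly on [f].  The functionals [f |-> coef (pre^k f)]
    separate the points of [C*(M)]: if they all vanish, [f = T^n (pre^n f)] for every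
    [n], so [f = 0].  Given an [e]-separated set [A] in [M], tents of radius [e/2]
    centred at the points of [A] have disjoint supports, so their sums with unimodular
    coefficients have norm at most 1 and each functional is large on only finitely
    many tents; as every tent is seen by some functional, [A] is countable.  Finally, a
    metric space all of whose uniformly separated subsets are countable is separable. *)

(* The factor 2 makes room for [R[i]], whose real and imaginary parts converge
   separately. *)
Definition complete_with_rate (K : numFieldType) :=
  forall u : nat -> K, (forall n m, (n <= m)%N -> `|u n - u m| <= n.+1%:R^-1) ->
  exists l, forall n, `|u n - l| <= 2 / n.+1%:R.

Definition separating_functionals (K : numFieldType) (M : topologicalType)
    (phi : nat -> (M -> K^o) -> K) :=
  [/\ forall k (a : K) f g, Cstar f -> Cstar g ->
        phi k (fun x => a * f x + g x) = a * phi k f + phi k g,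
      forall k, exists C : K, forall f r, Cstar f -> 0 <= r -> supnorm_le f r ->
        `|phi k f| <= C * r
    & forall f, Cstar f -> (forall k, phi k f = 0) -> f = fun _ => 0].

Section ArchimedeanField.
Variable K : numFieldType.
Hypothesis archiK : Num.archimedean_axiom K.

Lemma archi_inv_lt (e : K) : 0 < e -> exists n : nat, n.+1%:R^-1 < e.
Proof.
move=> e0; have [n en] := archiK e^-1.
exists n; rewrite -[e]invrK ltf_pV2 ?posrE ?invr_gt0 ?ltr0Sn//.
by move: en; rewrite gtr0_norm ?invr_gt0// => /lt_le_trans->//; rewrite ler_nat.
Qed.

Lemma norm_le_divS_eq0 (z c : K) : (forall n, `|z| <= c / n.+1%:R) -> z = 0.
Proof.
move=> zc; apply/eqP; apply/negPn/negP => z0.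
have c0 : 0 < c by have := zc 0%N; rewrite divr1; apply: lt_le_trans; rewrite normr_gt0.
have [n nz] : exists n : nat, n.+1%:R^-1 < `|z| / c.
  by apply: archi_inv_lt; rewrite divr_gt0// normr_gt0.
by move: nz; rewrite ltr_pdivlMr// mulrC => /lt_geF; rewrite zc.
Qed.

End ArchimedeanField.

Lemma archiNum_archimedean (R : archiNumDomainType) : Num.archimedean_axiom R.
Proof. by move=> x; exists (Num.bound `|x|); rewrite archi_boundP. Qed.

Section BoundedContinuous.
Variables (K : numFieldType) (M : topologicalType).
Implicit Types (f g : M -> K^o) (r : K).

Lemma Cstar_lin (a : K) f g : Cstar f -> Cstar g -> Cstar (fun x => a * f x + g x).
Proof.
move=> [fc [r fr]] [gc [s gs]]; split.
  by move=> x; apply: cvgD; [apply: cvgM; [exact: cvg_cst | exact: fc] | exact: gc].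
exists (`|a| * r + s) => x; rewrite (le_trans (ler_normD _ _))// normrM.
by rewrite lerD// ler_wpM2l.
Qed.

Lemma Cstar0 : Cstar (fun _ : M => 0 : K^o).
Proof. by split; [move=> x; exact: cvg_cst | exists 0 => x; rewrite normr0]. Qed.

Lemma CstarZ (a : K) f : Cstar f -> Cstar (fun x => a * f x).
Proof.
by move=> Cf; have := Cstar_lin a Cf Cstar0; under eq_fun do rewrite addr0.
Qed.

Lemma CstarB f g : Cstar f -> Cstar g -> Cstar (fun x => f x - g x).
Proof.
by move=> Cf Cg; have := Cstar_lin (-1) Cg Cf; under eq_fun do rewrite mulN1r addrC.
Qed.

Lemma Cstar_sum (I : Type) (s : seq I) (u : I -> K) (b : I -> M -> K^o) :
  (forall i, Cstar (b i)) -> Cstar (fun x => \sum_(i <- s) u i * b i x).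
Proof.
move=> Cb; elim: s => [|i s IHs].
  by under eq_fun do rewrite big_nil; exact: Cstar0.
by under eq_fun do rewrite big_cons; exact: Cstar_lin.
Qed.

Lemma supnorm_le_norm f r : supnorm_le f r -> supnorm_le f `|r|.
Proof. by move=> fr x; rewrite (ger0_norm (le_trans (normr_ge0 _) (fr x))). Qed.

Lemma supnorm_le0 f : supnorm_le f 0 -> f = fun _ => 0.
Proof.
by move=> f0; apply/funext => x; apply/normr0_eq0/eqP; rewrite eq_le normr_ge0 f0.
Qed.

Hypotheses (archiK : Num.archimedean_axiom K) (completeK : complete_with_rate K).

Lemma Cstar_complete (hs : nat -> M -> K^o) :
  (forall n, Cstar (hs n)) ->
  (forall n m, (n <= m)%N -> supnorm_le (fun x => hs n x - hs m x) n.+1%:R^-1) ->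
  exists2 h, Cstar h & forall n, supnorm_le (fun x => hs n x - h x) (2 / n.+1%:R).
Proof.
move=> Chs hs_cauchy.
have /choice[h hsh] : forall x, exists l, forall n, `|hs n x - l| <= 2 / n.+1%:R.
  by move=> x; apply: completeK => n m nm; exact: hs_cauchy.
exists h; last by move=> n x; exact: hsh.
split.
  move=> x; apply/cvgrPdist_lt => e e0.
  have e3 : 0 < e / 3%:R by rewrite divr_gt0.
  have [n ne] := archi_inv_lt archiK (divr_gt0 e3 (ltr0Sn K 1)).
  have hn_lt y : `|hs n y - h y| < e / 3%:R.
    by apply: le_lt_trans (hsh y n) _; rewrite mulrC -ltr_pdivlMr.
  have [hnc _] := Chs n; have /cvgrPdist_lt/(_ _ e3) := hnc x.
  apply: filterS => y hnxy.
  have -> : h x - h y = (h x - hs n x) + (hs n x - hs n y) + (hs n y - h y).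
    by rewrite !addrA subrK addrNK.
  have -> : e = e / 3%:R + e / 3%:R + e / 3%:R by field.
  rewrite (le_lt_trans (ler_normD _ _))// ltrD// (le_lt_trans (ler_normD _ _))//.
  by rewrite ltrD// distrC.
have [_ [B hs0B]] := Chs 0%N.
exists (B + 2) => x; have -> : h x = hs 0%N x - (hs 0%N x - h x) by rewrite opprB addrC subrK.
by rewrite (le_trans (ler_normB _ _))// lerD// (le_trans (hsh x 0%N))// divr1.
Qed.

End BoundedContinuous.
Arguments Cstar0 {K M}.

Section IsometricShift.
Variables (K : numFieldType) (M : topologicalType) (T : (M -> K^o) -> M -> K^o).
Implicit Types (f g h : M -> K^o) (r : K).
Hypothesis Cstar_shift : forall f, Cstar f -> Cstar (T f).
Hypothesis shift_lin : forall (a : K) f g, Cstar f -> Cstar g ->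
  T (fun x => a * f x + g x) = (fun x => a * T f x + T g x).
Hypothesis shift_iso : forall f, Cstar f -> forall r, supnorm_le f r <-> supnorm_le (T f) r.

Lemma shift0 : T (fun _ => 0) = (fun _ => 0).
Proof.
have := shift_lin (-1) Cstar0 Cstar0; under eq_fun do rewrite mulr0 addr0.
by move=> ->; apply/funext => x; rewrite mulN1r addNr.
Qed.

Lemma shiftZ (a : K) f : Cstar f -> T (fun x => a * f x) = (fun x => a * T f x).
Proof.
move=> Cf; have := shift_lin a Cf Cstar0; rewrite shift0.
by under eq_fun do rewrite addr0; under [RHS]eq_fun do rewrite addr0.
Qed.

Lemma shiftB f g : Cstar f -> Cstar g -> T (fun x => f x - g x) = (fun x => T f x - T g x).
Proof.
move=> Cf Cg; have := shift_lin (-1) Cg Cf; under eq_fun do rewrite mulN1r addrC.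
by under [RHS]eq_fun do rewrite mulN1r addrC.
Qed.

Lemma shift_supnormB f g r : Cstar f -> Cstar g ->
  supnorm_le (fun x => f x - g x) r <-> supnorm_le (fun x => T f x - T g x) r.
Proof. by move=> Cf Cg; rewrite -shiftB//; exact: shift_iso (CstarB Cf Cg) r. Qed.

Lemma shift_inj f g : Cstar f -> Cstar g -> T f = T g -> f = g.
Proof.
move=> Cf Cg Tfg; have : supnorm_le (fun x => T f x - T g x) 0.
  by rewrite Tfg => x; rewrite subrr normr0.
move/(shift_supnormB _ Cf Cg)/supnorm_le0 => fg0; apply/funext => x.
by apply/eqP; rewrite -subr_eq0; apply/eqP; exact: (congr1 (@^~ x) fg0).
Qed.

Hypotheses (archiK : Num.archimedean_axiom K) (completeK : complete_with_rate K).

Lemma shift_range_closed g :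
  (forall n, exists2 h, Cstar h & supnorm_le (fun x => T h x - g x) n.+1%:R^-1) ->
  exists2 h, Cstar h & g = T h.
Proof.
move=> approx.
have /choice[hs hsP] : forall n, exists h,
    Cstar h /\ supnorm_le (fun x => T h x - g x) (n.*2.+2%:R^-1).
  by move=> n; have [h Ch hg] := approx n.*2.+1; exists h.
have half n : n.*2.+2%:R^-1 = n.+1%:R^-1 / 2 :> K.
  by rewrite -invfM -natrM mulnC mul2n doubleS.
have hs_cauchy n m : (n <= m)%N ->
    supnorm_le (fun x => hs n x - hs m x) n.+1%:R^-1.
  move=> nm; apply/shift_supnormB; [exact: (hsP n).1 | exact: (hsP m).1 | move=> x].
  have -> : T (hs n) x - T (hs m) x = (T (hs n) x - g x) - (T (hs m) x - g x).
    by rewrite opprB addrA subrK.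
  rewrite (le_trans (ler_normB _ _))// [leRHS]splitr -half lerD ?(hsP n).2//.
  rewrite (le_trans ((hsP m).2 x))// !half ler_pM2r ?invr_gt0 ?ltr0n//.
  by rewrite lef_pV2 ?posrE ?ltr0Sn// ler_nat.
have [h Ch hsh] := Cstar_complete archiK completeK (fun n => (hsP n).1) hs_cauchy.
exists h => //; apply/funext => x; apply/eqP; rewrite eq_sym -subr_eq0; apply/eqP.
apply: (@norm_le_divS_eq0 _ archiK _ 3%:R) => n.
have Thsh : supnorm_le (fun x => T (hs n) x - T h x) (2 / n.+1%:R).
  by apply/(shift_supnormB _ (hsP n).1 Ch) => y; exact: hsh.
have -> : T h x - g x = (T (hs n) x - g x) - (T (hs n) x - T h x).
  by rewrite opprB [RHS]addrC addrA subrK.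
rewrite (le_trans (ler_normB _ _))// (_ : 3%:R / _ = n.+1%:R^-1 + 2 / n.+1%:R).
  rewrite lerD// (le_trans ((hsP n).2 x))// half ler_pdivrMr// ler_peMr//.
  by rewrite ler1n.
by ring.
Qed.

Variable g0 : M -> K^o.
Hypotheses (Cg0 : Cstar g0) (g0_notin_range : ~ exists2 h, Cstar h & g0 = T h).

(* Only nonnegative bounds [r] are considered: when [M] is empty every [r] bounds
   every function. *)
Lemma shift_range_dist_gt0 : exists2 d : K, 0 < d &
  forall h r, Cstar h -> 0 <= r -> supnorm_le (fun x => T h x + g0 x) r -> d <= r.
Proof.
have [[n bound]|unbounded] := pselect (exists n : nat, forall h r, Cstar h -> 0 <= r ->
    supnorm_le (fun x => T h x + g0 x) r -> n.+1%:R^-1 <= r).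
  by exists n.+1%:R^-1; rewrite ?invr_gt0.
exfalso; apply: g0_notin_range; apply: shift_range_closed => n.
have /existsNP[h /existsNP[r /not_implyP[Ch /not_implyP[r0 /not_implyP[hr nle]]]]] :=
  (forallNP _).2 unbounded n.
exists (fun x => -1 * h x); first exact: CstarZ.
rewrite shiftZ// => x; rewrite mulN1r -opprD normrN (le_trans (hr x))// ltW//.
by rewrite real_ltNge ?realE ?r0 ?invr_ge0 ?ler0n//; apply/negP.
Qed.

Lemma shift_decomp_uniq h h' c c' : Cstar h -> Cstar h' ->
  (fun x => T h x + c * g0 x) = (fun x => T h' x + c' * g0 x) -> c = c' /\ h = h'.
Proof.
move=> Ch Ch' hh'.
have Thh' x : T h x - T h' x = (c' - c) * g0 x.
  have -> : T h x = T h' x + c' * g0 x - c * g0 x by rewrite -(congr1 (@^~ x) hh') addrK.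
  by ring.
have cc' : c = c'.
  apply/eqP; apply/negPn/negP => c'c; apply: g0_notin_range.
  have cc'0 : c' - c != 0 by rewrite subr_eq0 eq_sym.
  exists (fun x => (c' - c)^-1 * (h x - h' x)); first exact/CstarZ/CstarB.
  rewrite shiftZ ?shiftB//; last exact: CstarB.
  by apply/funext => x; rewrite Thh' mulKf.
split => //; apply: shift_inj => //; apply/funext => x.
by apply/eqP; rewrite -subr_eq0 Thh' cc' subrr mul0r.
Qed.

Section Decomposition.
Variables (coef : (M -> K^o) -> K) (pre : (M -> K^o) -> M -> K^o).
Hypothesis decompP : forall f, Cstar f ->
  Cstar (pre f) /\ f = (fun x => T (pre f) x + coef f * g0 x).

Lemma decomp_eq f h c : Cstar h -> f = (fun x => T h x + c * g0 x) ->
  coef f = c /\ pre f = h.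
Proof.
move=> Ch fE; have Cf : Cstar f.
  by rewrite fE; under eq_fun do rewrite addrC; exact: Cstar_lin (Cstar_shift Ch).
have [Cpf fE'] := decompP Cf.
by have [-> ->] := shift_decomp_uniq Cpf Ch (etrans (esym fE') fE).
Qed.

Lemma decomp_lin (a : K) f g : Cstar f -> Cstar g ->
  coef (fun x => a * f x + g x) = a * coef f + coef g /\
  pre (fun x => a * f x + g x) = (fun x => a * pre f x + pre g x).
Proof.
move=> Cf Cg; have [Cpf fE] := decompP Cf; have [Cpg gE] := decompP Cg.
apply: decomp_eq; first exact: Cstar_lin.
by rewrite shift_lin//; apply/funext => x; rewrite {1}fE {1}gE /=; ring.
Qed.

Lemma Cstar_iter_pre k f : Cstar f -> Cstar (iter k pre f).
Proof. by move=> Cf; elim: k => //= k IHk; exact: (decompP IHk).1. Qed.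

Lemma iter_pre_lin k (a : K) f g : Cstar f -> Cstar g ->
  iter k pre (fun x => a * f x + g x) = (fun x => a * iter k pre f x + iter k pre g x).
Proof.
move=> Cf Cg; elim: k => //= k ->.
by rewrite (decomp_lin _ (Cstar_iter_pre k Cf) (Cstar_iter_pre k Cg)).2.
Qed.

Lemma iter_decomp n f : Cstar f ->
  (forall k, (k < n)%N -> coef (iter k pre f) = 0) -> f = iter n T (iter n pre f).
Proof.
move=> Cf; elim: n => // n IHn coef0.
rewrite {1}IHn => [|k kn]; last by apply: coef0; rewrite ltnS ltnW.
have [_ fnE] := decompP (Cstar_iter_pre n Cf).
rewrite iterSr iterS {1}fnE coef0//; congr (iter n T _).
by apply/funext => x; rewrite mul0r addr0.
Qed.

Variable d : K.
Hypotheses (d_gt0 : 0 < d) (dist_g0 : forall h r, Cstar h -> 0 <= r ->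
  supnorm_le (fun x => T h x + g0 x) r -> d <= r).

Lemma coef_bound f r : Cstar f -> 0 <= r -> supnorm_le f r -> `|coef f| * d <= r.
Proof.
move=> Cf r0 fr; have [Cpf fE] := decompP Cf.
have [->|c0] := eqVneq (coef f) 0; first by rewrite normr0 mul0r.
have Ch : Cstar (fun x => (coef f)^-1 * pre f x) by exact: CstarZ.
rewrite mulrC -ler_pdivlMr ?normr_gt0//; apply: dist_g0 Ch _ _.
  by rewrite divr_ge0.
move=> x; rewrite shiftZ// (_ : _ + _ = (coef f)^-1 * f x).
  by rewrite normrM normfV mulrC ler_wpM2r ?invr_ge0.
have -> : f x = T (pre f) x + coef f * g0 x by rewrite {1}fE.
by rewrite mulrDr mulKf.
Qed.

Lemma pre_bound : exists2 C : K, 0 <= C &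
  forall f r, Cstar f -> 0 <= r -> supnorm_le f r -> supnorm_le (pre f) (r * C).
Proof.
have [_ [G /supnorm_le_norm g0G]] := Cg0.
exists (1 + `|G| / d); first by rewrite addr_ge0// divr_ge0// ltW.
move=> f r Cf r0 fr; have [Cpf fE] := decompP Cf.
apply/(shift_iso Cpf) => x.
have -> : T (pre f) x = f x - coef f * g0 x by rewrite {2}fE addrK.
rewrite (le_trans (ler_normB _ _))// mulrDr mulr1 lerD// normrM (mulrC `|G|) mulrA.
by rewrite ler_pM// ler_pdivlMr// coef_bound.
Qed.

Hypothesis shift_pure : forall f, Cstar f ->
  (forall n, (0 < n)%N -> exists2 h, Cstar h & f = iter n T h) -> f = fun _ => 0.

Lemma decomp_separating_functionals :
  separating_functionals (fun k f => coef (iter k pre f)).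
Proof.
split.
- move=> k a f g Cf Cg; rewrite iter_pre_lin//.
  exact: (decomp_lin _ (Cstar_iter_pre k Cf) (Cstar_iter_pre k Cg)).1.
- move=> k; have [C C0 preC] := pre_bound.
  exists (C ^+ k / d) => f r Cf r0 fr.
  have iter_bound : supnorm_le (iter k pre f) (r * C ^+ k).
    elim: k => [|k IHk] /=; first by rewrite expr0 mulr1.
    rewrite exprS mulrCA mulrC; apply: preC IHk; first exact: Cstar_iter_pre.
    by rewrite mulr_ge0// exprn_ge0.
  rewrite mulrAC ler_pdivlMr// (mulrC (C ^+ k)).
  apply: coef_bound iter_bound; first exact: Cstar_iter_pre.
  by rewrite mulr_ge0// exprn_ge0.
- move=> f Cf coef0; apply: shift_pure => // n _.
  exists (iter n pre f); first exact: Cstar_iter_pre.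
  by apply: iter_decomp => // k _; exact: coef0.
Qed.

End Decomposition.
End IsometricShift.

Lemma isometric_shift_separating_functionals (K : numFieldType) (M : topologicalType)
    (T : (M -> K^o) -> M -> K^o) :
  Num.archimedean_axiom K -> complete_with_rate K -> @isometric_shift K M T ->
  exists phi : nat -> (M -> K^o) -> K, separating_functionals phi.
Proof.
move=> archiK completeK [Cstar_shift shift_lin shift_iso [g0 Cg0 [g0_notin decomp]] shift_pure].
have /choice[p decompP] : forall f, exists p : K * (M -> K^o),
    Cstar f -> Cstar p.2 /\ f = (fun x => T p.2 x + p.1 * g0 x).
  move=> f; have [Cf|nCf] := pselect (Cstar f); last by exists (0, f) => /nCf.
  by have [h Ch [c fE]] := decomp f Cf; exists (c, h).
have [d d_gt0 dist_g0] := shift_range_dist_gt0 shift_lin shift_iso archiK completeK g0_notin.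
exists (fun k f => (p (iter k (fun f => (p f).2) f)).1).
exact: (decomp_separating_functionals Cstar_shift shift_lin shift_iso Cg0 g0_notin
  (coef := fun f => (p f).1) (pre := fun f => (p f).2) decompP d_gt0 dist_g0 shift_pure).
Qed.

Lemma supnorm_le_disjoint_sum (K : numFieldType) (M : Type) (I : eqType) (s : seq I)
    (u : I -> K) (b : I -> M -> K^o) :
  uniq s -> (forall i, `|u i| <= 1) -> (forall i, supnorm_le (b i) 1) ->
  (forall i j, i \in s -> j \in s -> i != j -> forall x, b i x = 0 \/ b j x = 0) ->
  supnorm_le (fun x => \sum_(i <- s) u i * b i x) 1.
Proof.
move=> s_uniq u1 b1 b_disj x.
have [[i si bix]|b0] := pselect (exists2 i, i \in s & b i x != 0); last first.
  rewrite big1_seq ?normr0// => i /andP[_ si].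
  have [->|bix] := eqVneq (b i x) 0; first by rewrite mulr0.
  by case: b0; exists i.
rewrite (bigD1_seq i)//= big1_seq ?addr0 => [|j /andP[ji sj]].
  by rewrite normrM mulr_ile1 ?u1//; exact: b1.
have ij : i != j by rewrite eq_sym.
have [bi0|->] := b_disj i j si sj ij x; last by rewrite mulr0.
by rewrite bi0 eqxx in bix.
Qed.

Section DisjointFamily.
Variables (K : numFieldType) (M : topologicalType) (I : choiceType).
Hypothesis archiK : Num.archimedean_axiom K.
Variable phi : nat -> (M -> K^o) -> K.
Hypothesis phiS : separating_functionals phi.
Variables (A : set I) (b : I -> M -> K^o).
Hypotheses (Cb : forall i, Cstar (b i)) (b_neq0 : forall i, A i -> b i <> (fun _ => 0))
  (b_le1 : forall i, supnorm_le (b i) 1)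
  (b_disj : forall i j, A i -> A j -> i != j -> forall x, b i x = 0 \/ b j x = 0).

Lemma functional_sum k (s : seq I) (u : I -> K) :
  phi k (fun x => \sum_(i <- s) u i * b i x) = \sum_(i <- s) u i * phi k (b i).
Proof.
have [phi_lin _ _] := phiS.
elim: s => [|i s IHs].
  have phi0 : phi k (fun _ => 0) = 0.
    have := phi_lin k (-1) _ _ Cstar0 Cstar0; under eq_fun do rewrite mulr0 addr0.
    by rewrite mulN1r addNr.
  by rewrite big_nil -phi0; congr (phi k _); apply/funext => x; rewrite big_nil.
under eq_fun do rewrite big_cons; rewrite big_cons phi_lin ?IHs//.
exact: Cstar_sum.
Qed.

Lemma sum_functional_family_bounded k : exists C : K, forall s : seq I,
  uniq s -> (forall i, i \in s -> A i) -> \sum_(i <- s) `|phi k (b i)| <= C.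
Proof.
have [_ /(_ k)[C phiC] _] := phiS; exists C => s s_uniq sA.
pose u i := `|phi k (b i)| / phi k (b i).
have u1 i : `|u i| <= 1.
  rewrite normrM normfV normr_id; have [->|pb0] := eqVneq (phi k (b i)) 0.
    by rewrite normr0 mul0r.
  by rewrite mulfV ?normr_eq0.
have sum_u : \sum_(i <- s) u i * phi k (b i) = \sum_(i <- s) `|phi k (b i)|.
  apply: eq_bigr => i _; have [->|pb0] := eqVneq (phi k (b i)) 0.
    by rewrite normr0 mulr0.
  by rewrite divfK.
have b_disj_s i j : i \in s -> j \in s -> i != j -> forall x, b i x = 0 \/ b j x = 0.
  by move=> si sj; exact: b_disj (sA i si) (sA j sj).
have := phiC _ 1 (Cstar_sum s u Cb) ler01 (supnorm_le_disjoint_sum s_uniq u1 b_le1 b_disj_s).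
by rewrite mulr1 functional_sum sum_u ger0_norm ?sumr_ge0.
Qed.

Lemma functional_large_finite k m :
  finite_set [set i | A i /\ m.+1%:R^-1 < `|phi k (b i)|].
Proof.
have [C sumC] := sum_functional_family_bounded k.
have [N CN] := archiK (m.+1%:R * C).
apply: contrapT => /(infinite_set_fset N)[B BA NB].
have lower : (#|` B|)%:R / m.+1%:R <= \sum_(i <- B) `|phi k (b i)|.
  have <- : \sum_(i <- B) m.+1%:R^-1 = (#|` B|)%:R / m.+1%:R :> K.
    by rewrite big_const_seq count_predT iter_addr_0 mulr_natl.
  by rewrite !big_seq; apply: ler_sum => i /BA[_ /ltW].
have := le_trans lower (sumC _ (fset_uniq B) (fun i iB => (BA i iB).1)).
rewrite ler_pdivrMr// mulrC => sizeC.
have C0 : 0 <= m.+1%:R * C by rewrite (le_trans _ sizeC).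
move: CN; rewrite ger0_norm// => /(le_lt_trans sizeC).
by rewrite ltr_nat ltnNge NB.
Qed.

Lemma countable_disjoint_family : countable A.
Proof.
have [_ _ phi_sep] := phiS.
have cover : A `<=` \bigcup_k \bigcup_m [set i | A i /\ m.+1%:R^-1 < `|phi k (b i)|].
  move=> i Ai; have /existsNP[k phik] : ~ forall k, phi k (b i) = 0.
    by move=> /(phi_sep _ (Cb i)); exact: b_neq0.
  have phik0 : 0 < `|phi k (b i)| by rewrite normr_gt0; apply/eqP.
  have [m mk] := archi_inv_lt archiK phik0.
  by exists k => //; exists m.
apply: sub_countable (subset_card_le cover) _.
apply: bigcup_countable => // k _; apply: bigcup_countable => // m _.
exact/finite_set_countable/functional_large_finite.
Qed.

End DisjointFamily.

Section MetricSpace.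
Variables (R : realType) (M : metricType R).
Implicit Types (a x y : M) (e : R) (A : set M).

Definition separated e A := forall a a', A a -> A a' -> a != a' -> e <= mdist a a'.

Lemma mdist_lipschitz a x y : `|mdist a x - mdist a y| <= mdist x y.
Proof.
have := metric_triangle a y x; have := metric_triangle a x y.
by rewrite (metric_sym y x) ler_norml => ? ?; apply/andP; split; lra.
Qed.

Lemma mdist_continuous a : continuous (mdist a).
Proof.
move=> x; apply/cvgrPdist_lt => e e0; apply: filterS (nbhsx_ballx x e e0) => y.
by rewrite ballEmdist /=; apply: le_lt_trans (mdist_lipschitz a x y).
Qed.

Lemma maximal_separated_net e : 0 < e ->
  exists2 A, separated e A & forall x, exists2 a, A a & mdist a x < e.
Proof.
move=> e0; have [A [sepA maxA]] : exists A, separated e A /\ forall B, A `<` B -> ~ separated e B.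
  apply: Zorn_bigcup => F sepF chainF a a' [X FX Xa] [Y FY Ya'].
  have [XY|YX] := chainF X Y FX FY; [exact: sepF Y FY a a' (XY a Xa) Ya' |
                                     exact: sepF X FX a a' Xa (YX a' Ya')].
exists A => // x; apply: contrapT => far.
have far' a : A a -> e <= mdist a x.
  by move=> Aa; rewrite leNgt; apply/negP => ax; apply: far; exists a.
have Ax : ~ A x by move=> /far'; rewrite mdistxx leNgt e0.
apply: (maxA (A `|` [set x])).
  by split; [exact: subsetUl | move=> /(_ x (or_intror erefl))].
move=> a a' [Aa|->] [Aa'|->] aa'.
- exact: sepA.
- exact: far'.
- by rewrite metric_sym; exact: far'.
- by rewrite eqxx in aa'.
Qed.

Lemma separable_of_separated_countable :
  (forall e A, 0 < e -> separated e A -> countable A) -> separable_space M.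
Proof.
move=> sep_countable.
have /choice[A netA] : forall n : nat, exists A, separated n.+1%:R^-1 A /\
    forall x, exists2 a, A a & mdist a x < n.+1%:R^-1.
  move=> n; have [|A] := @maximal_separated_net n.+1%:R^-1; last by exists A.
  by rewrite invr_gt0.
exists (\bigcup_n A n); split.
  apply: bigcup_countable => // n _; apply: (sep_countable n.+1%:R^-1) (netA n).1.
  by rewrite invr_gt0.
move=> O [x Ox] oO; have /nbhs_ballP[r r0 xrO] := open_nbhs_nbhs (conj oO Ox).
have [n nr] := archi_inv_lt (@archiNum_archimedean R) r0.
have [a Ana ax] := (netA n).2 x.
exists a; split; last by exists n.
by apply: xrO; rewrite ballEmdist /= metric_sym (lt_trans ax).
Qed.

End MetricSpace.

Section RealEmbedding.
Variables (R : realType) (K : numFieldType) (emb : {rmorphism R -> K}).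
Hypotheses (archiK : Num.archimedean_axiom K) (emb_norm : forall t, `|emb t| = emb `|t|).

Lemma emb_ge0 t : 0 <= t -> 0 <= emb t.
Proof. by move=> t0; rewrite -(ger0_norm t0) -emb_norm. Qed.

Lemma emb_le s t : s <= t -> emb s <= emb t.
Proof. by move=> st; rewrite -subr_ge0 -rmorphB emb_ge0// subr_ge0. Qed.

Lemma emb_lt s t : s < t -> emb s < emb t.
Proof. by move=> st; rewrite lt_neqAle emb_le ?ltW// andbT (inj_eq (fmorph_inj _)) lt_eqF. Qed.

Lemma emb_continuous : continuous (emb : R -> K^o).
Proof.
move=> t; apply/cvgrPdist_lt => e e0; have [n ne] := archi_inv_lt archiK e0.
have n0 : 0 < n.+1%:R^-1 :> R by rewrite invr_gt0.
apply: filterS (nbhsx_ballx t _ n0) => s; rewrite -ball_normE /= => ts.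
by rewrite -rmorphB emb_norm (lt_trans _ ne)// -(rmorph_nat emb) -fmorphV emb_lt.
Qed.

Lemma separated_bumps (M : metricType R) (e : R) (A : set M) : 0 < e -> separated e A ->
  exists b : M -> M -> K^o, [/\ forall a, Cstar (b a), forall a, b a <> (fun _ => 0),
    forall a, supnorm_le (b a) 1 &
    forall a a', A a -> A a' -> a != a' -> forall x, b a x = 0 \/ b a' x = 0].
Proof.
move=> e0 sepA; pose beta (a x : M) : R := Num.max 0 (1 - 2 * mdist a x / e).
have beta_cont a : continuous (beta a).
  move=> x; apply: (@continuous_max _ _ (cst 0) (fun x => 1 - 2 * mdist a x / e)).
    exact: cvg_cst.
  apply: cvgB; first exact: cvg_cst.
  by apply: cvgMr_tmp; apply: cvgMl_tmp; exact: mdist_continuous.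
have beta01 a x : 0 <= beta a x <= 1.
  rewrite le_max lexx ge_max ler01 gerBl.
  by rewrite divr_ge0 ?mulr_ge0 ?mdist_ge0 ?ler0n ?(ltW e0).
have beta_supp a x : beta a x != 0 -> mdist a x < e / 2.
  rewrite /beta; have [_|] := leP (1 - 2 * mdist a x / e) 0; first by rewrite eqxx.
  by rewrite subr_gt0 ltr_pdivrMr// mul1r => *; lra.
have b_le1 a : supnorm_le (fun x => emb (beta a x)) 1.
  move=> x; rewrite emb_norm -(rmorph1 emb) emb_le//.
  by rewrite ger0_norm; have /andP[] := beta01 a x.
exists (fun a x => emb (beta a x)); split => [a|a|//|a a' Aa Aa' aa' x].
- split; last by exists 1; exact: b_le1.
  by move=> x; apply: continuous_comp; [exact: beta_cont | exact: emb_continuous].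
- move=> /(congr1 (@^~ a)) /eqP.
  by rewrite /beta mdistxx mulr0 mul0r subr0 max_r ?ler01// rmorph1 oner_eq0.
- have [->|bax] := eqVneq (beta a x) 0; first by left; rewrite rmorph0.
  have [->|ba'x] := eqVneq (beta a' x) 0; first by right; rewrite rmorph0.
  exfalso; have := metric_triangle a x a'; rewrite (metric_sym x a').
  have := beta_supp a x bax; have := beta_supp a' x ba'x; have := sepA a a' Aa Aa' aa'.
  lra.
Qed.

End RealEmbedding.

Lemma separable_of_isometric_shift (R : realType) (M : metricType R) (K : numFieldType)
    (emb : {rmorphism R -> K}) :
  Num.archimedean_axiom K -> complete_with_rate K -> (forall t, `|emb t| = emb `|t|) ->
  has_isometric_shift K M -> separable_space M.
Proof.
move=> archiK completeK emb_norm [T shiftT].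
have [phi phiS] := isometric_shift_separating_functionals archiK completeK shiftT.
apply: separable_of_separated_countable => e A e0 sepA.
have [b [Cb b_neq0 b_le1 b_disj]] := separated_bumps archiK emb_norm e0 sepA.
exact: (countable_disjoint_family archiK phiS Cb (fun a _ => b_neq0 a) b_le1 b_disj).
Qed.

Lemma real_cauchy_rate_lim (R : realType) (u : nat -> R) :
  (forall n m, (n <= m)%N -> `|u n - u m| <= n.+1%:R^-1) ->
  exists l, forall n, `|u n - l| <= n.+1%:R^-1.
Proof.
move=> u_cauchy.
have /cauchy_cvg/cvg_ex[l ul] : cauchy (u @ \oo).
  apply/cauchyP => e e0; have [N Ne] := archi_inv_lt (@archiNum_archimedean R) e0.
  exists (u N); exists N => // n /= Nn.
  by rewrite -ball_normE /= (le_lt_trans (u_cauchy _ _ Nn)).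
exists l => n; apply/ler_addgt0Pr => e e0.
move/cvgrPdist_lt: ul => /(_ e e0)[N _ uNl].
have -> : u n - l = (u n - u (maxn n N)) + (u (maxn n N) - l) by rewrite addrA subrK.
rewrite (le_trans (ler_normD _ _))// lerD ?u_cauchy ?leq_maxl//.
by rewrite distrC ltW// uNl//= leq_maxr.
Qed.

Lemma real_complete_with_rate (R : realType) : complete_with_rate R.
Proof.
move=> u /real_cauchy_rate_lim[l ul]; exists l => n.
by rewrite (le_trans (ul n))// ler_peMl ?invr_ge0// ler1n.
Qed.

Section Complex.
Variable R : realType.
Local Open Scope complex_scope.

Lemma real_complex_norm (t : R) : `|t%:C| = `|t|%:C.
Proof. by rewrite normc_def /= expr0n addr0 sqrtr_sqr. Qed.

Lemma complex_archimedean : Num.archimedean_axiom R[i].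
Proof.
move=> x; rewrite normc_def.
have [n rn] := @archiNum_archimedean R (Num.sqrt (complex.Re x ^+ 2 + complex.Im x ^+ 2)).
by exists n; rewrite -(rmorph_nat (real_complex R)) ltcR (le_lt_trans (ler_norm _) rn).
Qed.

Lemma normc_ge_Im (x : R[i]) : `|complex.Im x|%:C <= `|x|.
Proof.
case: x => a b; rewrite normc_def /= lecR -sqrtr_sqr.
by apply: ler_wsqrtr; rewrite lerDr sqr_ge0.
Qed.

Lemma normc_le_ReIm (x : R[i]) : `|x| <= (`|complex.Re x| + `|complex.Im x|)%:C.
Proof.
rewrite [X in `|X|]complexE rmorphD /= (le_trans (ler_normD _ _))// lerD//.
  by rewrite real_complex_norm.
by rewrite normrM real_complex_norm normc_def /= expr0n expr1n add0r sqrtr1 mul1r.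
Qed.

Lemma complex_complete_with_rate : complete_with_rate R[i].
Proof.
move=> u u_cauchy.
have part (p : {additive R[i] -> R}) : (forall x, `|p x|%:C <= `|x|) ->
    exists l, forall n, `|p (u n) - l| <= n.+1%:R^-1.
  move=> p_le; apply: real_cauchy_rate_lim => n m nm.
  rewrite -lecR -raddfB (le_trans (p_le _))// (le_trans (u_cauchy n m nm))//.
  by rewrite fmorphV rmorph_nat.
have [a ua] := part (@complex.Re R) (@normc_ge_Re R).
have [b ub] := part (@complex.Im R) normc_ge_Im.
exists (a +i* b) => n; rewrite (le_trans (normc_le_ReIm _))// !raddfB /=.
rewrite (_ : 2 / _ = (n.+1%:R^-1 + n.+1%:R^-1)%:C); first by rewrite lecR lerD ?ua ?ub.
by rewrite rmorphD fmorphV rmorph_nat /=; ring.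
Qed.

End Complex.

Theorem theorem1 (R : realType) (M : metricType R) :
  complete_space M ->
  (has_isometric_shift R M -> separable_space M) /\
  (has_isometric_shift R[i] M -> separable_space M).
Proof.
move=> _; split.
  by apply: (@separable_of_isometric_shift R M R idfun);
    [exact: archiNum_archimedean | exact: real_complete_with_rate | ].
apply: (@separable_of_isometric_shift R M R[i] (real_complex R)).
- exact: complex_archimedean.
- exact: complex_complete_with_rate.
- exact: real_complex_norm.
Qed.
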